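(* Let $\lambda\vdash n$ with ${\rm aft}(\lambda)=k$. Then $f^\lambda\leq n^k/\sqrt{k!}$ and $f^\lambda\geq \binom{n-k}{k}$.
   Context: For $\lambda\vdash n$, ${\rm aft}(\lambda):=n-\max\{\lambda_1,\ell(\lambda)\}$, where $\ell(\lambda)$ is the number of nonzero parts. $f^\lambda$ denotes the number of standard Young tableaux of shape $\lambda$. *)

From HB Require Import structures.
From mathcomp Require Import all_boot all_order all_algebra.
Set Implicit Arguments. Unset Strict Implicit. Unset Printing Implicit Defensive.
Import Order.TTheory GRing.Theory Num.Theory.

Definition is_partition (n : nat) (la : seq nat) : bool :=
  [&& sorted geq la, all (fun p => 0 < p) la & sumn la == n].

Definition plength (la : seq nat) : nat := size la.
Definition part1 (la : seq nat) : nat := head 0 la.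

Definition aft (la : seq nat) : nat := sumn la - maxn (part1 la) (plength la).

(* Cell (i, j) (row i, column j, 0-indexed) lies in the Young diagram of la. *)
Definition in_shape (la : seq nat) (i j : nat) : bool := j < nth 0 la i.

(* A standard Young tableau of shape la (|la| = N): a filling of the cells of
   the diagram (all of which have coordinates < N) by 1..N, each used once,
   strictly increasing along rows and down columns.  Cells outside the
   diagram carry the dummy value 0. *)
Arguments in_shape : clear implicits.
Definition is_syt (la : seq nat)
    (t : {ffun 'I_(sumn la) * 'I_(sumn la) -> 'I_(sumn la).+1}) : bool :=
  [&& [forall c : 'I_(sumn la) * 'I_(sumn la),
         (nat_of_ord (t c) != 0) == in_shape la c.1 c.2],
      [forall c : 'I_(sumn la) * 'I_(sumn la), forall d : 'I_(sumn la) * 'I_(sumn la),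
         [&& in_shape la c.1 c.2, in_shape la d.1 d.2 & t c == t d] ==> (c == d)],
      [forall c : 'I_(sumn la) * 'I_(sumn la), forall d : 'I_(sumn la) * 'I_(sumn la),
         [&& in_shape la d.1 d.2, nat_of_ord c.1 == d.1 & nat_of_ord c.2 < d.2]
           ==> (nat_of_ord (t c) < t d)] &
      [forall c : 'I_(sumn la) * 'I_(sumn la), forall d : 'I_(sumn la) * 'I_(sumn la),
         [&& in_shape la d.1 d.2, nat_of_ord c.2 == d.2 & nat_of_ord c.1 < d.1]
           ==> (nat_of_ord (t c) < t d)]].

Arguments is_syt : clear implicits.
Definition nsyt (la : seq nat) : nat := #|[set t | is_syt la t]|.

From HB Require Import structures.
From mathcomp Require Import all_boot all_order all_algebra.
From mathcomp Require Import zify.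
Set Implicit Arguments. Unset Strict Implicit. Unset Printing Implicit Defensive.

(* f^la counts the saturated chains from la down to the empty shape in
   Young's lattice.  The up and down operators satisfy DU = UD + 1, so the
   walks U^k D^k from the empty shape number k!; they contain the pairs of
   chains ending at any mu of size k, hence (f^mu)^2 <= k!.
   If la_1 >= ell(la), deleting the first row leaves a partition mu of size
   k = aft(la), and a tableau of shape la is determined by the set of its k
   entries outside the first row and by a tableau of shape mu, so
   f^la <= C(n, k) f^mu <= n^k / k! * sqrt(k!); the case of the first column
   is symmetric.  Removing from la the last cell of the first row or the last
   cell of the last row and applying Pascal's rule gives f^la >= C(la_1,
   n - la_1) by induction, and symmetrically f^la >= C(ell, n - ell). *)

(* Partitions are handled as sequences without trailing zeros, [trim0]
   restoring that normal form after a cell is removed. *)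
Fixpoint trim0 (s : seq nat) : seq nat :=
  if s is x :: s' then
    let t := trim0 s' in if (t == [::]) && (x == 0) then [::] else x :: t
  else [::].

Definition trimmed (s : seq nat) := last 1 s != 0.

Lemma nth_trim0 s r : nth 0 (trim0 s) r = nth 0 s r.
Proof.
elim: s r => [|x s IH] r //=.
case: ifP => [/andP[/eqP e /eqP ->]|_]; last by case: r.
by case: r => [|r] //=; rewrite -IH e nth_nil.
Qed.

Lemma trimmed_trim0 s : trimmed (trim0 s).
Proof.
rewrite /trimmed; elim: s => [|x s IH] //=.
case: ifP => //= /negbT; rewrite negb_and.
by case: (trim0 s) IH.
Qed.

Lemma size_trim0 s : size (trim0 s) <= size s.
Proof. by elim: s => [|x s IH] //=; case: ifP => //= _; rewrite ltnS. Qed.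

Lemma sumn_trim0 s : sumn (trim0 s) = sumn s.
Proof.
by elim: s => //= x s IH; case: ifP => /= [/andP[/eqP e /eqP ->]|_]; rewrite -IH ?e.
Qed.

Lemma trimmedE s : trimmed s = (size s == 0) || (0 < nth 0 s (size s).-1).
Proof. by case: s => //= x s; rewrite /trimmed /= (last_nth 0) lt0n. Qed.

Lemma eq_trimmed s t : trimmed s -> trimmed t ->
  (forall r, nth 0 s r = nth 0 t r) -> s = t.
Proof.
have size_le u v : trimmed u -> (forall r, nth 0 u r = nth 0 v r) -> size u <= size v.
  rewrite trimmedE => /orP[/eqP -> //|hu] huv.
  rewrite leqNgt; apply/negP => lt.
  by move: hu; rewrite huv nth_default //; case: (size u) lt.
move=> hs ht e; apply: (eq_from_nth (x0 := 0)) => [|r _]; last exact: e.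
by apply/eqP; rewrite eqn_leq !size_le // => r; rewrite e.
Qed.

Lemma trimmed_behead s : trimmed s -> trimmed (behead s).
Proof. by case: s => //= x [|y s]. Qed.

Lemma nth_le_sumn (s : seq nat) j : nth 0 s j <= sumn s.
Proof.
elim: s j => [|x s IH] [|j] //=; first by rewrite leq_addr.
exact: leq_trans (IH j) (leq_addl _ _).
Qed.

Lemma sumn_nth_ord (s : seq nat) m : size s <= m -> sumn s = \sum_(r < m) nth 0 s r.
Proof.
move=> h; rewrite -(big_mkord xpredT (fun r => nth 0 s r)) sumnE (big_nth 0).
rewrite /index_iota !subn0 -(subnKC h) iotaD big_cat /= [X in _ = _ + X]big1_seq ?addn0 //.
by move=> i /andP[_]; rewrite mem_iota => /andP[hi _]; rewrite nth_default //; lia.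
Qed.

Definition is_part (s : seq nat) := (forall r, nth 0 s r.+1 <= nth 0 s r) /\ trimmed s.

Lemma is_part_nil : is_part [::].
Proof. by split => // r; rewrite nth_nil. Qed.

Lemma nth_part_mono s a b : is_part s -> a <= b -> nth 0 s b <= nth 0 s a.
Proof.
move=> [d _] /subnK <-; elim: (b - a) => [|m IH] //=.
by rewrite addSn; apply: leq_trans (d _) IH.
Qed.

Lemma size_part_gt s r : is_part s -> (r < size s) = (0 < nth 0 s r).
Proof.
move=> ps; case: (ltnP r (size s)) => h; last by rewrite nth_default.
have [_] := ps; rewrite trimmedE; case: (size s) h => // m h /= pos.
by apply/esym; apply: leq_trans pos (nth_part_mono ps _); lia.
Qed.

Lemma all_part_gt0 s : is_part s -> all (fun x => 0 < x) s.
Proof. by move=> ps; apply/(all_nthP 0) => i hi; rewrite -size_part_gt. Qed.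

Lemma size_le_sumn (s : seq nat) : all (fun x => 0 < x) s -> size s <= sumn s.
Proof. by elim: s => //= x s IH /andP[hx /IH]; lia. Qed.

Lemma part_sumn0 s : is_part s -> sumn s = 0 -> s = [::].
Proof. by case: s => // a s ps; have := size_part_gt 0 ps; rewrite /=; lia. Qed.

Lemma is_part_behead s : is_part s -> is_part (behead s).
Proof.
by move=> [d l]; split; [move=> r; rewrite !nth_behead | exact: trimmed_behead].
Qed.

Lemma is_partition_part n la : is_partition n la -> is_part la.
Proof.
move=> /and3P[so po _]; split.
  move=> r; case: (ltnP r.+1 (size la)) => h; last by rewrite (nth_default 0 h).
  apply: (@sorted_leq_nth _ geq (fun y x z h1 h2 => leq_trans h2 h1) leqnn 0 la so);
  rewrite ?inE //; lia.
case: la so po => //= x s _ /andP[px ps]; rewrite /trimmed /= -lt0n.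
by have := mem_last x s; rewrite inE => /orP[/eqP -> //|]; move/allP: ps; apply.
Qed.

Definition addable (s : seq nat) i := (i == 0) || (nth 0 s i < nth 0 s i.-1).
Definition removable (s : seq nat) j := nth 0 s j.+1 < nth 0 s j.
Definition remove_cell s j := trim0 (set_nth 0 s j (nth 0 s j).-1).

Lemma removable_size v j : is_part v -> removable v j -> j < size v.
Proof. by move=> pv; rewrite size_part_gt // /removable; lia. Qed.

Lemma removable_sumn v j : removable v j -> 0 < sumn v.
Proof. by rewrite /removable => rj; apply: leq_trans (nth_le_sumn v j); lia. Qed.

Lemma big_removable_sumn0 v m (F : 'I_m -> nat) : sumn v = 0 ->
  \sum_(j < m | removable v j) F j = 0.
Proof. by move=> h; rewrite big1 // => j /removable_sumn; rewrite h. Qed.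

Lemma nth_remove_cell s j r : nth 0 (remove_cell s j) r = nth 0 s r - (r == j).
Proof.
rewrite /remove_cell nth_trim0 nth_set_nth /=.
by case: eqP => [->|_]; rewrite ?subn0 //; lia.
Qed.

Lemma nth_incr_nthr s i r : nth 0 (incr_nth s i) r = nth 0 s r + (r == i).
Proof. by rewrite nth_incr_nth addnC eq_sym. Qed.

Lemma size_remove_cell s j : size (remove_cell s j) <= maxn j.+1 (size s).
Proof. by rewrite /remove_cell (leq_trans (size_trim0 _)) // size_set_nth. Qed.

Lemma size_incr_nth_le s i : size (incr_nth s i) <= maxn i.+1 (size s).
Proof. by rewrite size_incr_nth; case: ifP; lia. Qed.

Lemma sumn_remove_cell v j : removable v j -> sumn (remove_cell v j) = (sumn v).-1.
Proof.
rewrite /removable /remove_cell sumn_trim0 sumn_set_nth0 => h.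
by have := nth_le_sumn v j; lia.
Qed.

Lemma trimmed_incr_nth s i : trimmed s -> addable s i -> trimmed (incr_nth s i).
Proof.
rewrite !trimmedE size_incr_nth /addable nth_incr_nthr.
case: (ltnP i (size s)) => hi.
  by move=> /orP[/eqP|] h; [lia | move=> _; apply/orP; right; lia].
move=> _ /orP[/eqP i0|]; first by subst i; case: s hi.
case: (ltnP (size s) i) => hs; first by rewrite !nth_default //; lia.
have -> : i = size s by lia.
by rewrite /= eqxx; lia.
Qed.

Lemma is_part_incr_nth s i : is_part s -> addable s i -> is_part (incr_nth s i).
Proof.
move=> [d l] a; split; last exact: trimmed_incr_nth.
move=> r; rewrite !nth_incr_nthr; move: a (d r); rewrite /addable.
by case: (eqVneq r.+1 i) => [<-|_] /=; [lia | case: (r == i); lia].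
Qed.

Lemma is_part_remove_cell s j : is_part s -> removable s j -> is_part (remove_cell s j).
Proof.
move=> [d l] a; split; last exact: trimmed_trim0.
move=> r; rewrite !nth_remove_cell; move: a (d r); rewrite /removable.
case: (eqVneq r.+1 j) => [<-|_] /=; first by have := d r.+1; lia.
by case: eqP => [->|]; lia.
Qed.

Lemma removable_incr_nth v i : is_part v -> removable (incr_nth v i) i.
Proof. by move=> [d _]; rewrite /removable !nth_incr_nthr eqxx; have := d i; case: eqP; lia. Qed.

Lemma incr_nthK v i : trimmed v -> remove_cell (incr_nth v i) i = v.
Proof.
move=> tv; apply: eq_trimmed tv _ => [|r]; first exact: trimmed_trim0.
by rewrite nth_remove_cell nth_incr_nthr; lia.
Qed.

Lemma addable_remove_cell v j : is_part v -> removable v j -> addable (remove_cell v j) j.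
Proof.
move=> [d _] rj; rewrite /addable !nth_remove_cell eqxx.
by case: j rj => [|j] //= rj; have := d j; move: rj; rewrite /removable; case: eqP; lia.
Qed.

Lemma remove_cellK v j : is_part v -> removable v j -> incr_nth (remove_cell v j) j = v.
Proof.
move=> pv rj; have [_ tv] := pv; apply: eq_trimmed tv _ => [|r].
  by apply: trimmed_incr_nth (trimmed_trim0 _) (addable_remove_cell pv rj).
by rewrite nth_incr_nthr nth_remove_cell; move: rj; rewrite /removable; case: eqP => [->|]; lia.
Qed.

Lemma addable_removable_comm v i j :
  [&& addable v i, removable (incr_nth v i) j & j != i] =
  [&& removable v j, addable (remove_cell v j) i & i != j].
Proof.
rewrite /addable /removable !nth_incr_nthr !nth_remove_cell.
case: i => [|i] /=; first by rewrite (eq_sym j 0); case: j => [|j] //=; lia.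
case: (eqVneq i j) => [->|ne]; first by rewrite eqxx /=; lia.
have -> : (j.+1 == i.+1) = false by apply/negbTE; rewrite eqSS eq_sym.
lia.
Qed.

Lemma remove_cell_incr_nth v i j : removable v j -> addable (remove_cell v j) i -> i != j ->
  remove_cell (incr_nth v i) j = incr_nth (remove_cell v j) i.
Proof.
move=> rj ai ne; apply: eq_trimmed; first exact: trimmed_trim0.
  exact: trimmed_incr_nth (trimmed_trim0 _) ai.
move=> r; rewrite !nth_remove_cell !nth_incr_nthr !nth_remove_cell; move: rj; rewrite /removable.
by case: (eqVneq r j) => [->|]; [rewrite eq_sym (negbTE ne); lia | lia].
Qed.

Definition ups (s : seq nat) :=
  map (incr_nth s) (filter (addable s) (iota 0 (size s).+1)).
Definition downs (s : seq nat) :=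
  map (remove_cell s) (filter (removable s) (iota 0 (size s))).

Lemma big_ups (g : seq nat -> nat) s m : (size s).+1 <= m ->
  \sum_(x <- ups s) g x = \sum_(i < m | addable s i) g (incr_nth s i).
Proof.
move=> h; rewrite big_map big_filter -(big_mkord (addable s) (fun i => g (incr_nth s i))).
rewrite /index_iota subn0 -(subnKC h) iotaD big_cat /= [X in _ + X]big1_seq ?addn0 //.
move=> i /andP[ai]; rewrite mem_iota => /andP[hi _]; move: ai.
by rewrite /addable (_ : (i == 0) = false) ?nth_default //; lia.
Qed.

Lemma big_downs (g : seq nat -> nat) s m : size s <= m ->
  \sum_(x <- downs s) g x = \sum_(j < m | removable s j) g (remove_cell s j).
Proof.
move=> h; rewrite big_map big_filter -(big_mkord (removable s) (fun i => g (remove_cell s i))).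
rewrite /index_iota subn0 -(subnKC h) iotaD big_cat /= [X in _ + X]big1_seq ?addn0 //.
move=> i /andP[ai]; rewrite mem_iota => /andP[hi _]; move: ai.
by rewrite /removable !nth_default //; lia.
Qed.

Lemma ups_part s x : is_part s -> x \in ups s -> is_part x.
Proof.
by move=> ps /mapP[i]; rewrite mem_filter => /andP[a _] ->; apply: is_part_incr_nth.
Qed.

Lemma downs_part s x : is_part s -> x \in downs s -> is_part x.
Proof.
by move=> ps /mapP[i]; rewrite mem_filter => /andP[a _] ->; apply: is_part_remove_cell.
Qed.

Lemma sumn_downs v x : x \in downs v -> sumn x = (sumn v).-1.
Proof. by move=> /mapP[j]; rewrite mem_filter => /andP[rj _] ->; apply: sumn_remove_cell. Qed.

Lemma ups_uniq v : uniq (ups v).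
Proof. by rewrite map_inj_uniq ?filter_uniq ?iota_uniq //; apply: incr_nth_inj. Qed.

Lemma downs_uniq v : uniq (downs v).
Proof.
rewrite map_inj_in_uniq ?filter_uniq ?iota_uniq // => i j.
rewrite !mem_filter /removable => /andP[ri _] /andP[rj _] e.
by have := congr1 (fun s => nth 0 s i) e; rewrite !nth_remove_cell eqxx; case: eqP => // _; lia.
Qed.

Lemma addable_size y j : addable y j -> j < (size y).+1.
Proof.
case: j => // j; rewrite /addable /= ltnS => h.
by case: (ltnP j (size y)) => // hs; move: h; rewrite !nth_default //; lia.
Qed.

Lemma mem_downs_ups x y : is_part x -> y \in downs x -> x \in ups y.
Proof.
move=> px /mapP[j]; rewrite mem_filter => /andP[rj _] ->.
rewrite -{1}(remove_cellK px rj); have aj := addable_remove_cell px rj.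
by apply: map_f; rewrite mem_filter aj mem_iota /= add0n; apply: addable_size aj.
Qed.

Section UpDown.

Variables (g : seq nat -> nat) (v : seq nat).
Hypothesis pv : is_part v.
Let M := (size v).+2.

Lemma big_downs_incr_nth (i : 'I_M) :
  \sum_(y <- downs (incr_nth v i)) g y =
  g v + \sum_(j < M | removable (incr_nth v i) j && (j != i))
          g (remove_cell (incr_nth v i) j).
Proof.
have [_ tv] := pv; rewrite (big_downs _ (m := M)); last first.
  by apply: leq_trans (size_incr_nth_le _ _) _; have := ltn_ord i; rewrite /M; lia.
by rewrite (bigD1 i) /= ?incr_nthK ?removable_incr_nth.
Qed.

Lemma big_ups_remove_cell (j : 'I_M) : removable v j ->
  \sum_(y <- ups (remove_cell v j)) g y =
  g v + \sum_(i < M | addable (remove_cell v j) i && (i != j))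
          g (incr_nth (remove_cell v j) i).
Proof.
move=> rj; have jlt : j < size v.
  by rewrite (size_part_gt _ pv); move: rj; rewrite /removable; lia.
rewrite (big_ups _ (m := M)); last first.
  by have := size_remove_cell v j; rewrite /M; move: (size _) (nat_of_ord j) jlt => a b; lia.
by rewrite (bigD1 j) /= ?remove_cellK ?addable_remove_cell.
Qed.

Lemma exchange_add_remove :
  \sum_(i < M | addable v i) \sum_(j < M | removable (incr_nth v i) j && (j != i))
      g (remove_cell (incr_nth v i) j) =
  \sum_(j < M | removable v j) \sum_(i < M | addable (remove_cell v j) i && (i != j))
      g (incr_nth (remove_cell v j) i).
Proof.
transitivity (\sum_(i < M) \sum_(j < M)
    if [&& addable v i, removable (incr_nth v i) j & j != i]
    then g (remove_cell (incr_nth v i) j) else 0).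
  rewrite big_mkcond; apply: eq_bigr => i _.
  by case: ifP => _; rewrite ?big_mkcond // big1.
rewrite exchange_big /=.
transitivity (\sum_(j < M) \sum_(i < M)
    if [&& removable v j, addable (remove_cell v j) i & i != j]
    then g (incr_nth (remove_cell v j) i) else 0); last first.
  rewrite [RHS]big_mkcond; apply: eq_bigr => j _.
  by case: ifP => _; rewrite ?[RHS]big_mkcond // big1.
apply: eq_bigr => j _; apply: eq_bigr => i _.
by rewrite addable_removable_comm; case: ifP => // /and3P[rj ai ne]; rewrite remove_cell_incr_nth.
Qed.

(* A cell can be added to row i.+1 exactly when one can be removed from row i. *)
Lemma big_addable_removable (c : nat) :
  \sum_(i < M | addable v i) c = \sum_(i < M | removable v i) c + c.
Proof.
rewrite big_mkcond [in RHS]big_mkcond /= big_ord_recl [in RHS]big_ord_recr /=.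
have -> : removable v (size v).+1 = false by rewrite /removable !nth_default //; lia.
rewrite addn0 addnC.
by congr (_ + _); apply: eq_bigr.
Qed.

End UpDown.

Lemma big_ups_downs (g : seq nat -> nat) v : is_part v ->
  \sum_(x <- ups v) \sum_(y <- downs x) g y =
  \sum_(x <- downs v) \sum_(y <- ups x) g y + g v.
Proof.
move=> pv; rewrite !(big_ups _ (leqnSn _)) (big_downs _ (leqW (leqnSn _))).
rewrite (eq_bigr _ (fun i _ => big_downs_incr_nth g pv i)).
rewrite (eq_bigr _ (big_ups_remove_cell g pv)) !big_split /= exchange_add_remove.
by rewrite big_addable_removable addnAC.
Qed.

(* Walks in Young's lattice following a word read left to right, [true]
   adding a cell and [false] removing one. *)
Fixpoint nwalks (s : seq nat) (w : seq bool) : nat :=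
  if w is b :: w' then \sum_(x <- if b then ups s else downs s) nwalks x w' else 1.

Definition nchains (v : seq nat) := nwalks v (nseq (sumn v) false).

Lemma nwalks_UD v w : is_part v ->
  nwalks v (true :: false :: w) = nwalks v (false :: true :: w) + nwalks v w.
Proof. exact: big_ups_downs. Qed.

Lemma nwalks_UkD a v w : is_part v ->
  nwalks v (nseq a true ++ false :: w) =
  nwalks v (false :: nseq a true ++ w) + a * nwalks v (nseq a.-1 true ++ w).
Proof.
elim: a v => [|a IH] v pv; first by rewrite /= addn0.
rewrite [LHS]/= (eq_big_seq (fun x => nwalks x (false :: nseq a true ++ w)
    + a * nwalks x (nseq a.-1 true ++ w))); last first.
  by move=> x xu; rewrite IH //; apply: ups_part xu.
rewrite big_split /= -big_distrr /=.
rewrite -[\sum_(i <- ups v) _]/(nwalks v (true :: false :: nseq a true ++ w)) nwalks_UD //.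
case: a {IH} => [|a]; first by rewrite mul0n addn0 mul1n.
by rewrite -[\sum_(i <- ups v) _]/(nwalks v (nseq a.+1 true ++ w)) -addnA -mulSn.
Qed.

Lemma nwalks_nil_UkDk k : nwalks [::] (nseq k true ++ nseq k false) = k`!.
Proof.
elim: k => // k IH.
by rewrite [nseq k.+1 false]/= nwalks_UkD ?is_part_nil //= big_nil add0n IH factS.
Qed.

Lemma nchains_rec v n : sumn v = n.+1 -> nchains v = \sum_(x <- downs v) nchains x.
Proof.
by move=> h; rewrite /nchains h; apply: eq_big_seq => x /sumn_downs ->; rewrite h.
Qed.

Lemma nchains_remove_cell v m : 0 < sumn v -> size v <= m ->
  nchains v = \sum_(j < m | removable v j) nchains (remove_cell v j).
Proof. by move=> h hm; rewrite (@nchains_rec _ (sumn v).-1) ?(big_downs _ hm); lia. Qed.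

Lemma leq_big_removable_nchains v m : size v <= m ->
  \sum_(j < m | removable v j) nchains (remove_cell v j) <= nchains v.
Proof.
move=> hm; case: (posnP (sumn v)) => h; last by rewrite (nchains_remove_cell h hm).
by rewrite big_removable_sumn0.
Qed.

Lemma big_uniq_sub (T : eqType) (s r : seq T) (f : T -> nat) :
  uniq s -> uniq r -> {subset s <= r} ->
  \sum_(x <- s) f x = \sum_(x <- r | x \in s) f x.
Proof.
move=> us ur sr; rewrite -[RHS]big_filter; apply/perm_big/uniq_perm => //.
  exact: filter_uniq.
by move=> x; rewrite mem_filter; apply/idP/andP => [xs|[]//]; split => //; apply: sr.
Qed.

Lemma leq_big_uniq_sub (T : eqType) (s r : seq T) (f : T -> nat) :
  uniq s -> uniq r -> {subset s <= r} ->
  \sum_(x <- s) f x <= \sum_(x <- r) f x.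
Proof.
move=> us ur sr; rewrite (big_uniq_sub f us ur sr) [X in _ <= X](bigID (mem s)).
exact: leq_addr.
Qed.

(* The left-hand side counts pairs of a chain from the empty shape up to
   some x in L and a walk t from x: these are distinct walks U^k t from the
   empty shape. *)
Lemma leq_big_nchains_nwalks k t (L : seq (seq nat)) : uniq L ->
  (forall x, x \in L -> is_part x /\ sumn x = k) ->
  \sum_(x <- L) nchains x * nwalks x t <= nwalks [::] (nseq k true ++ t).
Proof.
elim: k t L => [|k IH] t L uL hL.
  rewrite (leq_trans (leq_big_uniq_sub _ uL (r := [:: [::]]) _ _)) ?big_seq1 ?mul1n //.
  by move=> x /[dup] /hL[px /(part_sumn0 px) ->].
pose L' := undup (flatten (map downs L)).
have uL' : uniq L' := undup_uniq _.
have subL' x : x \in L -> {subset downs x <= L'}.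
  by move=> xL y yd; rewrite mem_undup; apply/flattenP; exists (downs x); rewrite ?map_f.
have hL' y : y \in L' -> is_part y /\ sumn y = k.
  rewrite mem_undup => /flattenP[s /mapP[x xL ->] yd]; have [px sx] := hL x xL.
  by split; [apply: downs_part yd | rewrite (sumn_downs yd) sx].
have -> : nseq k.+1 true ++ t = nseq k true ++ true :: t by elim: (k) => //= k' ->.
apply: leq_trans (IH (true :: t) L' uL' hL').
rewrite (eq_big_seq (fun x => \sum_(y <- L' | y \in downs x) nchains y * nwalks x t));
  last first.
  move=> x xL; have [px sx] := hL x xL.
  by rewrite (nchains_rec sx) big_distrl (big_uniq_sub _ (downs_uniq x) uL' (subL' x xL)).
rewrite (exchange_big_dep xpredT) //= [X in X <= _]big_seq_cond [X in _ <= X]big_seq_cond.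
apply: leq_sum => y /andP[yL' _]; rewrite -big_distrr leq_mul2l -big_filter /=.
apply/orP; right; apply: leq_big_uniq_sub; rewrite ?filter_uniq ?ups_uniq // => x.
by rewrite mem_filter => /andP[yd xL]; apply: mem_downs_ups yd; have [] := hL x xL.
Qed.

Lemma nchains_sqr_le_fact v : is_part v -> nchains v * nchains v <= (sumn v)`!.
Proof.
move=> pv; rewrite -nwalks_nil_UkDk.
have := @leq_big_nchains_nwalks (sumn v) (nseq (sumn v) false) [:: v] erefl.
by rewrite big_seq1; apply => x; rewrite inE => /eqP ->.
Qed.

Lemma pascal_upper n k a b f s :
  a <= 'C(n, k) * f -> b <= 'C(n, k.-1) * s -> s <= f -> (k = 0 -> b = 0) ->
  a + b <= 'C(n.+1, k) * f.
Proof.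
case: k => [|k] ha hb hsf hk0; first by rewrite hk0 // addn0 !bin0 in ha *.
by rewrite binS mulnDl leq_add // (leq_trans hb) // leq_mul2l hsf orbT.
Qed.

Lemma pascal_lower a c x y : 0 < a ->
  'C(a.-1, c.+1) <= x -> 'C(a, c) <= y -> 'C(a, c.+1) <= x + y.
Proof.
move=> a0 hx hy; rewrite -(prednK a0) binS leq_add //.
by rewrite (leq_trans _ hy) // leq_bin2l // leq_pred.
Qed.

Lemma bin_le1 n m : n <= m -> 'C(n, m) <= 1.
Proof. by rewrite leq_eqVlt => /orP[/eqP ->|/bin_small ->]; rewrite ?binn. Qed.

Lemma leq_nchains_remove_cell2 v i j : is_part v -> removable v i -> removable v j ->
  i != j -> nchains (remove_cell v i) + nchains (remove_cell v j) <= nchains v.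
Proof.
move=> pv ri rj ij; have iv := removable_size pv ri; have jv := removable_size pv rj.
rewrite (@nchains_remove_cell _ (size v) (removable_sumn ri) (leqnn _)).
rewrite (bigD1 (Ordinal iv)) // leq_add2l (bigD1 (Ordinal jv)) ?leq_addr //=.
by rewrite rj -val_eqE /= eq_sym.
Qed.

Lemma leq_nchains_remove_cell v j : is_part v -> removable v j ->
  nchains (remove_cell v j) <= nchains v.
Proof.
move=> pv rj; rewrite (@nchains_remove_cell _ (size v) (removable_sumn rj) (leqnn _)).
by rewrite (bigD1 (Ordinal (removable_size pv rj))) ?leq_addr.
Qed.

Lemma removable_last v : is_part v -> 0 < size v -> removable v (size v).-1.
Proof.
move=> pv h; rewrite /removable (nth_default 0 (_ : size v <= (size v).-1.+1)); last by lia.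
by rewrite -size_part_gt //; lia.
Qed.

Lemma nchains_gt0 v : is_part v -> 0 < nchains v.
Proof.
move=> pv; move sv: (sumn v) => n; elim: n v sv pv => [|n IH] v sv pv.
  by rewrite (part_sumn0 pv sv).
have rl : removable v (size v).-1 by apply: removable_last => //; case: v sv {pv}.
have pv' := is_part_remove_cell pv rl.
apply: leq_trans (leq_nchains_remove_cell pv rl).
by apply: IH pv'; rewrite sumn_remove_cell // sv.
Qed.

Lemma behead_remove_cell0 v : trimmed v -> behead (remove_cell v 0) = behead v.
Proof.
move=> tv; apply: eq_trimmed; [exact/trimmed_behead/trimmed_trim0 | exact: trimmed_behead |].
by move=> r; rewrite !nth_behead nth_remove_cell subn0.
Qed.

Lemma behead_remove_cellS v i : behead (remove_cell v i.+1) = remove_cell (behead v) i.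
Proof.
apply: eq_trimmed; [exact/trimmed_behead/trimmed_trim0 | exact: trimmed_trim0 |].
by move=> r; rewrite !nth_behead !nth_remove_cell nth_behead eqSS.
Qed.

Lemma nchains_le_bin_behead v : is_part v ->
  nchains v <= 'C(sumn v, sumn (behead v)) * nchains (behead v).
Proof.
move=> pv; move sv: (sumn v) => n; elim: n v sv pv => [|n IH] v sv pv.
  by rewrite (part_sumn0 pv sv).
have [_ tv] := pv; have sz : 0 < size v by case: v sv {pv tv}.
set k := sumn (behead v); rewrite (@nchains_remove_cell _ (size v)) ?sv //.
case E: (size v) sz => [//|m] _.
rewrite big_mkcond big_ord_recl -big_mkcond /=.
have -> : \sum_(i < m | removable v (bump 0 i)) nchains (remove_cell v (bump 0 i)) =
    \sum_(i < m | removable (behead v) i) nchains (remove_cell v i.+1).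
  by apply: eq_big => i; rewrite /removable ?nth_behead /bump leq0n add1n.
have IHv j : removable v j -> nchains (remove_cell v j) <=
    'C(n, sumn (behead (remove_cell v j))) * nchains (behead (remove_cell v j)).
  by move=> rj; apply: IH (is_part_remove_cell pv rj); rewrite sumn_remove_cell // sv.
apply: (pascal_upper (s := \sum_(i < m | removable (behead v) i)
    nchains (remove_cell (behead v) i))).
- case: ifP => // r0; have := IHv 0 r0; rewrite behead_remove_cell0 //.
- rewrite big_distrr /=; apply: leq_sum => i ri.
  have ri1 : removable v i.+1 by move: ri; rewrite /removable !nth_behead.
  by have := IHv _ ri1; rewrite behead_remove_cellS sumn_remove_cell.
- by apply: leq_big_removable_nchains; rewrite size_behead E.
- exact: big_removable_sumn0.
Qed.

Definition ctail (v : seq nat) := trim0 (map predn v).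

Lemma nth_ctail v r : nth 0 (ctail v) r = (nth 0 v r).-1.
Proof.
rewrite /ctail nth_trim0; case: (ltnP r (size v)) => h; first by rewrite (nth_map 0).
by rewrite !nth_default ?size_map.
Qed.

Lemma is_part_ctail v : is_part v -> is_part (ctail v).
Proof.
move=> [d l]; split; last exact: trimmed_trim0.
by move=> r; rewrite !nth_ctail; have := d r; lia.
Qed.

Lemma size_ctail v : size (ctail v) <= size v.
Proof. by rewrite /ctail (leq_trans (size_trim0 _)) // size_map. Qed.

Lemma sumn_ctail v : is_part v -> sumn (ctail v) = sumn v - size v.
Proof.
move/all_part_gt0; rewrite /ctail sumn_trim0.
by elim: v => //= x s IH /andP[hx hs]; rewrite IH //; have := size_le_sumn hs; lia.
Qed.

Lemma ctail_remove_cell v i : ctail (remove_cell v i) = remove_cell (ctail v) i.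
Proof.
apply: eq_trimmed; [exact: trimmed_trim0 | exact: trimmed_trim0 |].
by move=> r; rewrite !nth_ctail !nth_remove_cell nth_ctail; lia.
Qed.

Lemma remove_cell_nth0 v i : trimmed v -> nth 0 v i = 0 -> remove_cell v i = v.
Proof.
move=> tv vi; apply: eq_trimmed tv _ => [|r]; first exact: trimmed_trim0.
by rewrite nth_remove_cell; case: eqP => [->|]; lia.
Qed.

Lemma removable_ctail v i : removable (ctail v) i = removable v i && (nth 0 v i != 1).
Proof. by rewrite /removable !nth_ctail; lia. Qed.

Lemma removable_one_last v i : is_part v -> removable v i -> nth 0 v i = 1 ->
  i = (size v).-1.
Proof.
move=> pv ri vi; have := size_part_gt i.+1 pv; have := removable_size pv ri.
by move: ri; rewrite /removable vi; lia.
Qed.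

Lemma leq_big_unique m (P : pred 'I_m) (f : 'I_m -> nat) c :
  (forall i j, P i -> P j -> i = j) -> (forall i, P i -> f i <= c) ->
  \sum_(i < m | P i) f i <= c.
Proof.
move=> u b; case: (pickP P) => [i0 Pi0|none]; last by rewrite big_pred0.
rewrite (bigD1 i0) //= big1 ?addn0 ?b // => i /andP[Pi].
by rewrite (u _ _ Pi Pi0) eqxx.
Qed.

Lemma nchains_le_bin_ctail v : is_part v ->
  nchains v <= 'C(sumn v, sumn (ctail v)) * nchains (ctail v).
Proof.
move=> pv; move sv: (sumn v) => n; elim: n v sv pv => [|n IH] v sv pv.
  by rewrite (part_sumn0 pv sv).
have [_ tv] := pv; set k := sumn (ctail v).
rewrite (@nchains_remove_cell _ (size v)) ?sv //.
rewrite (bigID (fun j : 'I_(size v) => nth 0 v j == 1)) /=.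
under [X in _ + X <= _]eq_bigl => i do rewrite -removable_ctail.
have IHv j : removable v j -> nchains (remove_cell v j) <=
    'C(n, sumn (ctail (remove_cell v j))) * nchains (ctail (remove_cell v j)).
  by move=> rj; apply: IH (is_part_remove_cell pv rj); rewrite sumn_remove_cell // sv.
apply: (pascal_upper (s := \sum_(i < size v | removable (ctail v) i)
    nchains (remove_cell (ctail v) i))).
- apply: leq_big_unique => [i j /andP[ri /eqP vi] /andP[rj /eqP vj]|i /andP[ri /eqP vi]].
    by apply: val_inj; rewrite /= (removable_one_last pv ri vi) (removable_one_last pv rj vj).
  have e : remove_cell (ctail v) i = ctail v.
    by apply: remove_cell_nth0; [exact: trimmed_trim0 | rewrite nth_ctail vi].
  by have := IHv _ ri; rewrite ctail_remove_cell e.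
- rewrite big_distrr /=; apply: leq_sum => i ri.
  have ri' : removable v i by move: ri; rewrite removable_ctail => /andP[].
  by have := IHv _ ri'; rewrite ctail_remove_cell sumn_remove_cell.
- exact/leq_big_removable_nchains/size_ctail.
- exact: big_removable_sumn0.
Qed.

Lemma leq_nth01_sumn (v : seq nat) : nth 0 v 0 + nth 0 v 1 <= sumn v.
Proof. by case: v => [|x [|y s]] //=; lia. Qed.

(* When the first row has no corner, it is as long as the second one and the
   binomial coefficient is at most 1. *)
Lemma bin_part1_le_nchains v : is_part v ->
  'C(nth 0 v 0, sumn v - nth 0 v 0) <= nchains v.
Proof.
move=> pv; move sv: (sumn v) => n; elim: n v sv pv => [|n IH] v sv pv.
  by rewrite (part_sumn0 pv sv).
have IHv j : removable v j ->
    'C(nth 0 v 0 - (0 == j), n - (nth 0 v 0 - (0 == j))) <= nchains (remove_cell v j).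
  move=> rj; rewrite -nth_remove_cell.
  by apply: IH (is_part_remove_cell pv rj); rewrite sumn_remove_cell // sv.
have F0 := nchains_gt0 pv.
case: (posnP (n.+1 - nth 0 v 0)) => hc; first by rewrite hc bin0.
have sz : 1 < size v by move: sv hc; case: v {pv IHv F0} => [|x [|y s]] //=; lia.
set a := nth 0 v 0 in IHv hc *.
have rl : removable v (size v).-1 by apply: removable_last pv _; lia.
case r0: (removable v 0).
  have a0 : 0 < a by rewrite /a -size_part_gt //; lia.
  have l0 : (0 == (size v).-1) = false by apply/eqP; lia.
  apply: leq_trans (leq_nchains_remove_cell2 pv r0 rl (negbT l0)).
  have := IHv _ r0; have := IHv _ rl; rewrite eqxx l0 subn0 subn1.
  have -> : n.+1 - a = (n - a).+1 by lia.
  have -> : n - a.-1 = (n - a).+1 by lia.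
  by move=> h1 h0; apply: pascal_lower.
have v1 : nth 0 v 1 = a.
  by move: r0; rewrite /removable -/a; have := nth_part_mono pv (leqnSn 0); lia.
have := leq_nth01_sumn v; rewrite v1 sv => aa.
by apply: leq_trans F0; apply: bin_le1; lia.
Qed.

Lemma ex_flip (P : pred nat) N : P 0 -> ~~ P N -> exists2 j, j < N & P j && ~~ P j.+1.
Proof.
elim: N => [|N IH] p0 pN; first by rewrite p0 in pN.
case PN: (P N); first by exists N => //; rewrite PN.
by have [j jl hj] := IH p0 (negbT PN); exists j => //; lia.
Qed.

Lemma ex_removable_gt1 v i : 1 < nth 0 v 0 -> nth 0 v i <= 1 ->
  exists2 j, j < i & removable v j && (1 < nth 0 v j).
Proof.
move=> v0 vi; have vi' : ~~ (1 < nth 0 v i) by rewrite -leqNgt.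
have [j ji /andP[vj vj1]] := ex_flip (P := fun r => 1 < nth 0 v r) v0 vi'.
by exists j; rewrite // /removable vj andbT; lia.
Qed.

Lemma size_part_eq w N : is_part w -> (forall r, (r < N) = (0 < nth 0 w r)) -> size w = N.
Proof.
move=> pw h; have e r : (r < size w) = (r < N) by rewrite h size_part_gt.
apply/eqP; rewrite eqn_leq; apply/andP; split.
  by case: (size w) e => // m e; rewrite -e.
by case: N e {h} => // m e; rewrite e.
Qed.

Lemma size_remove_cell_gt1 v j : is_part v -> removable v j -> 1 < nth 0 v j ->
  size (remove_cell v j) = size v.
Proof.
move=> pv rj vj; apply: size_part_eq (is_part_remove_cell pv rj) _ => r.
by rewrite nth_remove_cell size_part_gt //; case: eqP => [->|]; lia.
Qed.

Lemma size_remove_cell_last v : is_part v -> nth 0 v (size v).-1 = 1 ->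
  size (remove_cell v (size v).-1) = (size v).-1.
Proof.
move=> pv v1; have sz : 0 < size v by case: v {pv} v1.
apply: size_part_eq (is_part_remove_cell pv (removable_last pv sz)) _ => r.
rewrite nth_remove_cell; case: eqP => [->|ne]; first by rewrite v1; lia.
case: (ltnP r (size v).-1) => hr; last by rewrite nth_default; lia.
by have := nth_part_mono pv (ltnW hr); rewrite v1; lia.
Qed.

Lemma leq_mul_size_sumn (v : seq nat) c : (forall r, r < size v -> c <= nth 0 v r) ->
  c * size v <= sumn v.
Proof.
move=> h; rewrite (sumn_nth_ord (leqnn _)).
have -> : c * size v = \sum_(i < size v) c by rewrite sum_nat_const card_ord mulnC.
by apply: leq_sum => i _; apply: h.
Qed.

Lemma leq_sumn_mul_size (v : seq nat) c : (forall r, nth 0 v r <= c) ->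
  sumn v <= c * size v.
Proof.
move=> h; rewrite (sumn_nth_ord (leqnn _)).
have -> : c * size v = \sum_(i < size v) c by rewrite sum_nat_const card_ord mulnC.
by apply: leq_sum => i _; apply: h.
Qed.

(* When all rows have length at least 2, the binomial coefficient is at most 1. *)
Lemma bin_size_le_nchains v : is_part v -> 'C(size v, sumn v - size v) <= nchains v.
Proof.
move=> pv; move sv: (sumn v) => n; elim: n v sv pv => [|n IH] v sv pv.
  by rewrite (part_sumn0 pv sv).
have IHv j : removable v j ->
    'C(size (remove_cell v j), n - size (remove_cell v j)) <= nchains (remove_cell v j).
  by move=> rj; apply: IH (is_part_remove_cell pv rj); rewrite sumn_remove_cell // sv.
have F0 := nchains_gt0 pv; set l := size v in IHv *.
case: (posnP (n.+1 - l)) => hc; first by rewrite hc bin0.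
have sz : 0 < l by rewrite /l; case: (v) sv.
have rl : removable v l.-1 by apply: removable_last.
case: (ltnP 1 (nth 0 v l.-1)) => [big|last1].
  have : 2 * l <= n.+1.
    rewrite -sv; apply: leq_mul_size_sumn => r rl'.
    by apply: leq_trans big (nth_part_mono pv _); rewrite /l; lia.
  by move=> ll; apply: leq_trans F0; apply: bin_le1; lia.
have v1 : nth 0 v l.-1 = 1 by move: rl last1; rewrite /removable; lia.
have v0 : 1 < nth 0 v 0.
  rewrite ltnNge; apply/negP => h.
  have := leq_sumn_mul_size (fun r => leq_trans (nth_part_mono pv (leq0n r)) h).
  by rewrite sv mul1n -/l; lia.
have [j jl /andP[rj vj]] := ex_removable_gt1 v0 last1.
have jl1 : j != l.-1 by rewrite neq_ltn jl.
apply: leq_trans (leq_nchains_remove_cell2 pv rj rl jl1).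
have := IHv _ rj; have := IHv _ rl.
rewrite /l (size_remove_cell_gt1 pv rj vj) size_remove_cell_last // -/l.
have -> : n.+1 - l = (n - l).+1 by lia.
have -> : n - l.-1 = (n - l).+1 by lia.
by move=> h1 h0; rewrite addnC; apply: pascal_lower.
Qed.

(* [is_syt] with the side [N] of the index square as a parameter
   ([is_syt la] is [syt_on (sumn la) la]), which keeps the shape out of the
   type of the tableau. *)
Definition syt_on N (la : seq nat) (t : {ffun 'I_N * 'I_N -> 'I_N.+1}) : bool :=
  [&& [forall c : 'I_N * 'I_N,
         (nat_of_ord (t c) != 0) == in_shape la c.1 c.2],
      [forall c : 'I_N * 'I_N, forall d : 'I_N * 'I_N,
         [&& in_shape la c.1 c.2, in_shape la d.1 d.2 & t c == t d] ==> (c == d)],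
      [forall c : 'I_N * 'I_N, forall d : 'I_N * 'I_N,
         [&& in_shape la d.1 d.2, nat_of_ord c.1 == d.1 & nat_of_ord c.2 < d.2]
           ==> (nat_of_ord (t c) < t d)] &
      [forall c : 'I_N * 'I_N, forall d : 'I_N * 'I_N,
         [&& in_shape la d.1 d.2, nat_of_ord c.2 == d.2 & nat_of_ord c.1 < d.1]
           ==> (nat_of_ord (t c) < t d)]].

Arguments syt_on : clear implicits.

Definition nsyt_on N la := #|[set t : {ffun 'I_N * 'I_N -> 'I_N.+1} | syt_on N la t]|.

Lemma syt_onP N la (t : {ffun 'I_N * 'I_N -> 'I_N.+1}) : reflect
  [/\ forall c : 'I_N * 'I_N, (nat_of_ord (t c) != 0) = in_shape la c.1 c.2,
      forall c d : 'I_N * 'I_N, in_shape la c.1 c.2 -> in_shape la d.1 d.2 -> t c = t d -> c = d,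
      forall c d : 'I_N * 'I_N, in_shape la d.1 d.2 ->
        nat_of_ord c.1 = d.1 -> nat_of_ord c.2 < d.2 -> nat_of_ord (t c) < t d &
      forall c d : 'I_N * 'I_N, in_shape la d.1 d.2 ->
        nat_of_ord c.2 = d.2 -> nat_of_ord c.1 < d.1 -> nat_of_ord (t c) < t d]
  (syt_on N la t).
Proof.
apply: (iffP and4P) => [[/forallP h1 /forallP h2 /forallP h3 /forallP h4]|[h1 h2 h3 h4]].
  split.
  - by move=> c; have /eqP := h1 c.
  - move=> c d sc sd e; have /forallP/(_ d) := h2 c.
    by rewrite sc sd e eqxx => /eqP.
  - move=> c d sd e lt; have /forallP/(_ d) := h3 c.
    by rewrite sd e eqxx lt => /implyP; apply.
  - move=> c d sd e lt; have /forallP/(_ d) := h4 c.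
    by rewrite sd e eqxx lt => /implyP; apply.
split.
- by apply/forallP => c; rewrite h1.
- apply/forallP => c; apply/forallP => d; apply/implyP => /and3P[sc sd /eqP e].
  by rewrite (h2 _ _ sc sd e).
- apply/forallP => c; apply/forallP => d; apply/implyP => /and3P[sd /eqP e lt].
  exact: h3.
- apply/forallP => c; apply/forallP => d; apply/implyP => /and3P[sd /eqP e lt].
  exact: h4.
Qed.

Lemma in_shape_lt mu i k : is_part mu -> in_shape mu i k -> i < sumn mu /\ k < sumn mu.
Proof.
move=> pm; rewrite /in_shape => h; split.
  have : i < size mu by rewrite size_part_gt //; lia.
  by move=> /leq_trans; apply; apply: size_le_sumn; apply: all_part_gt0.
exact: leq_trans h (nth_le_sumn _ _).
Qed.

Lemma val_inord n m : nat_of_ord (inord m : 'I_n.+1) = if m < n.+1 then m else 0.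
Proof. by rewrite /inord val_insubd. Qed.

Lemma sum_ord_ltn M m : \sum_(k < M) (if k < m then 1 else 0) = minn m M.
Proof.
elim: M => [|M IH]; first by rewrite big_ord0 minn0.
rewrite big_ord_recr /= IH; case: ltnP; lia.
Qed.

Lemma card_in_shape N la : is_part la -> sumn la = N ->
  #|[set c : 'I_N * 'I_N | in_shape la c.1 c.2]| = N.
Proof.
move=> pl sl.
rewrite -sum1_card big_mkcond /=.
rewrite (eq_bigr (fun p : 'I_N * 'I_N =>
  (fun i j => if j < nth 0 la i then 1 else 0) p.1 p.2)); last first.
  by move=> [i k] _; rewrite inE.
rewrite -(pair_bigA _ (fun (i j : 'I_N) => if j < nth 0 la i then 1 else 0)) /=.
rewrite (eq_bigr (fun i : 'I_N => nth 0 la i)).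
  rewrite -sumn_nth_ord // -sl; apply: size_le_sumn; exact: all_part_gt0.
move=> i _; rewrite sum_ord_ltn; have := nth_le_sumn la i; rewrite sl; lia.
Qed.

Lemma syt_on_max n la (t : {ffun 'I_n.+1 * 'I_n.+1 -> 'I_n.+2}) :
  is_part la -> sumn la = n.+1 -> syt_on n.+1 la t ->
  exists2 c : 'I_n.+1 * 'I_n.+1, in_shape la c.1 c.2 & t c = ord_max.
Proof.
move=> pl sl /syt_onP[h1 h2 _ _].
set A := [set c : 'I_n.+1 * 'I_n.+1 | in_shape la c.1 c.2].
have cA := card_in_shape pl sl.
have sub : t @: A \subset [set~ ord0].
  apply/subsetP => v /imsetP[c]; rewrite inE => sc ->.
  rewrite !inE; apply/negP => /eqP e; move: (h1 c); rewrite sc e /=; done.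
have cI : #|t @: A| = n.+1.
  rewrite card_in_imset ?cA // => c d; rewrite !inE; exact: h2.
have eqA : t @: A = [set~ ord0].
  by apply/eqP; rewrite eqEcard sub cardsC1 card_ord cI /=.
have : (ord_max : 'I_n.+2) \in t @: A by rewrite eqA !inE.
by case/imsetP => c; rewrite inE => sc ->; exists c.
Qed.

Lemma syt_on_max_corner n la (t : {ffun 'I_n.+1 * 'I_n.+1 -> 'I_n.+2}) (c : 'I_n.+1 * 'I_n.+1) :
  is_part la -> sumn la = n.+1 -> syt_on n.+1 la t -> in_shape la c.1 c.2 -> t c = ord_max ->
  removable la c.1 /\ nat_of_ord c.2 = (nth 0 la c.1).-1.
Proof.
move=> pl sl /syt_onP[h1 h2 h3 h4] sc tc.
have hmax : forall d : 'I_n.+1 * 'I_n.+1, nat_of_ord (t c) < t d -> False.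
  by move=> d; rewrite tc /=; have := ltn_ord (t d); lia.
have r : ~~ in_shape la c.1 c.2.+1.
  apply/negP => s; have [_ l2] := in_shape_lt pl s; rewrite sl in l2.
  apply: (hmax (c.1, inord c.2.+1)); apply: h3 => /=; rewrite ?inordK //.
have d : ~~ in_shape la c.1.+1 c.2.
  apply/negP => s; have [l1 _] := in_shape_lt pl s; rewrite sl in l1.
  apply: (hmax (inord c.1.+1, c.2)); apply: h4 => /=; rewrite ?inordK //.
move: sc r d; rewrite /in_shape /removable => sc r d; split; lia.
Qed.

Definition is_corner (la : seq nat) j (i k : nat) := (i == j) && (k == (nth 0 la j).-1).

Definition corner_cell n (la : seq nat) j : 'I_n.+1 * 'I_n.+1 :=
  (inord j, inord (nth 0 la j).-1).

Definition wcell n (c : 'I_n * 'I_n) : 'I_n.+1 * 'I_n.+1 :=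
  (widen_ord (leqnSn n) c.1, widen_ord (leqnSn n) c.2).

(* [inord] sends the entry n.+1, sitting in the removed corner, to 0, the
   value of the cells outside the shape. *)
Definition tab_restrict n (t : {ffun 'I_n.+1 * 'I_n.+1 -> 'I_n.+2}) :
    {ffun 'I_n * 'I_n -> 'I_n.+1} :=
  [ffun c => inord (t (wcell c))].

Definition tab_extend n (la : seq nat) j (t' : {ffun 'I_n * 'I_n -> 'I_n.+1}) :
    {ffun 'I_n.+1 * 'I_n.+1 -> 'I_n.+2} :=
  [ffun c : 'I_n.+1 * 'I_n.+1 => if is_corner la j c.1 c.2 then ord_max else
     match (insub (val c.1) : option 'I_n), (insub (val c.2) : option 'I_n) with
     | Some a, Some b => widen_ord (leqnSn n.+1) (t' (a, b))
     | _, _ => ord0 end].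

Lemma tab_restrictE n t (c : 'I_n * 'I_n) :
  nat_of_ord (tab_restrict t c) =
  if nat_of_ord (t (wcell c)) < n.+1 then nat_of_ord (t (wcell c)) else 0.
Proof. by rewrite ffunE val_inord. Qed.

Lemma tab_extend_corner n la j t' (c : 'I_n.+1 * 'I_n.+1) :
  is_corner la j c.1 c.2 -> tab_extend la j t' c = ord_max.
Proof. by move=> h; rewrite ffunE h. Qed.

Lemma tab_extendE n la j (t' : {ffun 'I_n * 'I_n -> 'I_n.+1}) (c : 'I_n.+1 * 'I_n.+1)
    (a b : 'I_n) :
  nat_of_ord c.1 = a -> nat_of_ord c.2 = b -> ~~ is_corner la j c.1 c.2 ->
  nat_of_ord (tab_extend la j t' c) = t' (a, b).
Proof.
move=> e1 e2 nc; have h1 : c.1 < n by rewrite e1.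
have h2 : c.2 < n by rewrite e2.
rewrite ffunE (negbTE nc) (insubT (fun x => x < n) h1) (insubT (fun x => x < n) h2) /=.
by congr (nat_of_ord (t' (_, _))); apply: val_inj; rewrite /= ?e1 ?e2.
Qed.

Lemma tab_extend_out n la j t' (c : 'I_n.+1 * 'I_n.+1) :
  ~~ is_corner la j c.1 c.2 -> ~~ ((c.1 < n) && (c.2 < n)) ->
  nat_of_ord (tab_extend la j t' c) = 0.
Proof.
move=> nc; rewrite ffunE (negbTE nc) negb_and => /orP[h|h].
  by case: insubP => [a ha _|//]; rewrite ha in h.
case: insubP => [a _ _|//]; case: insubP => [b hb _|//]; by rewrite hb in h.
Qed.

Lemma in_shape_remove_cell la j i k :
  in_shape (remove_cell la j) i k = in_shape la i k && ~~ is_corner la j i k.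
Proof.
rewrite /in_shape /is_corner nth_remove_cell; case: eqP => [->|_] /=; lia.
Qed.

Lemma corner_shape la j : removable la j -> in_shape la j (nth 0 la j).-1.
Proof. rewrite /removable /in_shape; lia. Qed.

Section RemoveMaxEntry.

Variables (n : nat) (la : seq nat) (j : nat).
Hypotheses (pl : is_part la) (sl : sumn la = n.+1) (rj : removable la j).

Local Notation corner := (corner_cell n la j).

Lemma corner_cellE : nat_of_ord corner.1 = j /\ nat_of_ord corner.2 = (nth 0 la j).-1.
Proof.
have [h1 h2] := in_shape_lt pl (corner_shape rj).
by rewrite /corner_cell /= !inordK // -sl.
Qed.

Lemma in_shape_corner_cell : in_shape la corner.1 corner.2.
Proof. by have [-> ->] := corner_cellE; apply: corner_shape. Qed.

Lemma is_corner_cell : is_corner la j corner.1 corner.2.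
Proof. by have [v1 v2] := corner_cellE; rewrite /is_corner v1 v2 !eqxx. Qed.

Lemma is_cornerP (c : 'I_n.+1 * 'I_n.+1) : is_corner la j c.1 c.2 -> c = corner.
Proof.
move=> /andP[/eqP e1 /eqP e2]; have [v1 v2] := corner_cellE.
by case: c e1 e2 => [a b] /= e1 e2; congr (_, _); apply: val_inj; rewrite /= ?v1 ?v2.
Qed.

Lemma noncorner_lt i k : in_shape la i k -> ~~ is_corner la j i k -> i < n /\ k < n.
Proof.
move=> s nc; have := in_shape_lt (is_part_remove_cell pl rj) (_ : in_shape (remove_cell la j) i k).
by rewrite sumn_remove_cell // sl; apply; rewrite in_shape_remove_cell s.
Qed.

Section Restrict.

Variable t : {ffun 'I_n.+1 * 'I_n.+1 -> 'I_n.+2}.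
Hypotheses (st : syt_on n.+1 la t) (tc : t corner = ord_max).

Lemma syt_on_noncorner_lt (c : 'I_n.+1 * 'I_n.+1) :
  in_shape la c.1 c.2 -> ~~ is_corner la j c.1 c.2 -> nat_of_ord (t c) < n.+1.
Proof.
have /syt_onP[_ h2 _ _] := st; move=> sc nc.
have := ltn_ord (t c); rewrite ltnS leq_eqVlt => /orP[/eqP e|//].
have e' : t c = t corner by rewrite tc; apply: val_inj.
by move: nc; rewrite (h2 _ _ sc in_shape_corner_cell e') is_corner_cell.
Qed.
Lemma syt_tab_restrict : syt_on n (remove_cell la j) (tab_restrict t).
Proof.
have /syt_onP[h1 h2 h3 h4] := st; have lt_max := syt_on_noncorner_lt.
apply/syt_onP; split.
- move=> c; rewrite tab_restrictE in_shape_remove_cell.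
  case sc: (in_shape la c.1 c.2) => /=; last first.
    by have := h1 (wcell c); rewrite sc /= => /negbFE/eqP ->.
  case nc: (is_corner la j c.1 c.2) => /=.
    by rewrite (is_cornerP (_ : is_corner la j (wcell c).1 (wcell c).2)) // tc /= ltnn.
  by rewrite (lt_max (wcell c)) ?nc // h1.
- move=> c d; rewrite !in_shape_remove_cell => /andP[sc nc] /andP[sd nd] e.
  have := congr1 (@nat_of_ord _) e.
  rewrite !tab_restrictE (lt_max (wcell c)) // (lt_max (wcell d)) // => /val_inj e'.
  have [e1 e2] : wcell c = wcell d by apply: h2.
  by case: c d {e sc sd nc nd e'} e1 e2 => [a b] [a' b'] /= e1 e2; congr (_, _); apply: val_inj.
- move=> c d; rewrite !in_shape_remove_cell => /andP[sd nd] e lt.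
  rewrite !tab_restrictE (lt_max (wcell d)) //.
  have := h3 (wcell c) (wcell d) sd e lt; have := lt_max (wcell d) sd nd; case: ifP => _; lia.
- move=> c d; rewrite !in_shape_remove_cell => /andP[sd nd] e lt.
  rewrite !tab_restrictE (lt_max (wcell d)) //.
  have := h4 (wcell c) (wcell d) sd e lt; have := lt_max (wcell d) sd nd; case: ifP => _; lia.
Qed.

Lemma tab_restrictK : tab_extend la j (tab_restrict t) = t.
Proof.
have /syt_onP[h1 _ _ _] := st; have lt_max := syt_on_noncorner_lt.
have out (c : 'I_n.+1 * 'I_n.+1) : ~~ in_shape la c.1 c.2 -> nat_of_ord (t c) = 0.
  by move=> sc; have := h1 c; rewrite (negbTE sc) => /negbFE/eqP.
apply/ffunP => c; apply: val_inj => /=.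
case nc: (is_corner la j c.1 c.2); first by rewrite tab_extend_corner // (is_cornerP nc) tc.
case hs: ((c.1 < n) && (c.2 < n)).
  move: hs => /andP[s1 s2].
  rewrite (tab_extendE (a := Ordinal s1) (b := Ordinal s2) _ erefl erefl (negbT nc)).
  rewrite tab_restrictE (_ : wcell (Ordinal s1, Ordinal s2) = c); last first.
    by case: c {nc} s1 s2 => a b s1 s2; congr (_, _); apply: val_inj.
  case sc: (in_shape la c.1 c.2); first by rewrite lt_max ?nc.
  by rewrite out ?sc.
rewrite tab_extend_out ?nc ?hs // out //; apply/negP => sc.
by have [s1 s2] := noncorner_lt sc (negbT nc); rewrite s1 s2 in hs.
Qed.

End Restrict.

Lemma noncorner_cell (c : 'I_n.+1 * 'I_n.+1) :
  in_shape la c.1 c.2 -> ~~ is_corner la j c.1 c.2 ->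
  exists a b : 'I_n,
    [/\ nat_of_ord c.1 = a, nat_of_ord c.2 = b & in_shape (remove_cell la j) a b].
Proof.
move=> sc nc; have [s1 s2] := noncorner_lt sc nc.
by exists (Ordinal s1), (Ordinal s2); split => //=; rewrite in_shape_remove_cell sc nc.
Qed.

Section Extend.

Variable t' : {ffun 'I_n * 'I_n -> 'I_n.+1}.
Hypothesis st' : syt_on n (remove_cell la j) t'.
Local Notation t := (tab_extend la j t').

Lemma tab_extend_noncorner_lt (c : 'I_n.+1 * 'I_n.+1) :
  in_shape la c.1 c.2 -> ~~ is_corner la j c.1 c.2 -> nat_of_ord (t c) < n.+1.
Proof.
by move=> sc nc; have [a [b [e1 e2 _]]] := noncorner_cell sc nc; rewrite (tab_extendE _ e1 e2 nc).
Qed.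

Lemma tab_extend_neq0 (c : 'I_n.+1 * 'I_n.+1) : (nat_of_ord (t c) != 0) = in_shape la c.1 c.2.
Proof.
have /syt_onP[h1 _ _ _] := st'.
case nc: (is_corner la j c.1 c.2).
  by rewrite tab_extend_corner //=; move: nc => /andP[/eqP -> /eqP ->]; rewrite corner_shape.
case sc: (in_shape la c.1 c.2).
  have [a [b [e1 e2 sab]]] := noncorner_cell sc (negbT nc).
  by rewrite (tab_extendE _ e1 e2 (negbT nc)) h1 sab.
case hs: ((c.1 < n) && (c.2 < n)); last by rewrite tab_extend_out ?nc ?hs.
move: hs => /andP[s1 s2].
rewrite (tab_extendE (a := Ordinal s1) (b := Ordinal s2) _ erefl erefl (negbT nc)) h1 /=.
by rewrite in_shape_remove_cell sc.
Qed.

Lemma tab_extend_inj (c d : 'I_n.+1 * 'I_n.+1) :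
  in_shape la c.1 c.2 -> in_shape la d.1 d.2 -> t c = t d -> c = d.
Proof.
have /syt_onP[_ h2 _ _] := st'; have lt_max := tab_extend_noncorner_lt.
move=> sc sd; case nc: (is_corner la j c.1 c.2); case nd: (is_corner la j d.1 d.2).
- by rewrite (is_cornerP nc) (is_cornerP nd).
- by rewrite (tab_extend_corner _ nc) => e; have := lt_max d sd (negbT nd); rewrite -e /= ltnn.
- by rewrite (tab_extend_corner _ nd) => e; have := lt_max c sc (negbT nc); rewrite e /= ltnn.
have [a [b [e1 e2 sab]]] := noncorner_cell sc (negbT nc).
have [a' [b' [e1' e2' sab']]] := noncorner_cell sd (negbT nd).
move=> /(congr1 (@nat_of_ord _)).
rewrite (tab_extendE _ e1 e2 (negbT nc)) (tab_extendE _ e1' e2' (negbT nd)) => /val_inj e.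
have [ea eb] := h2 (a, b) (a', b') sab sab' e.
case: c d e1 e2 e1' e2' {sc sd nc nd} => [c1 c2] [d1 d2] /= e1 e2 e1' e2'.
by congr (_, _); apply: ord_inj; rewrite ?e1 ?e1' ?e2 ?e2' ?ea ?eb.
Qed.

Lemma tab_extend_row (c d : 'I_n.+1 * 'I_n.+1) : in_shape la d.1 d.2 ->
  nat_of_ord c.1 = d.1 -> nat_of_ord c.2 < d.2 -> nat_of_ord (t c) < t d.
Proof.
have /syt_onP[_ _ h3 _] := st'; move=> sd e lt.
have sc : in_shape la c.1 c.2 by move: sd; rewrite /in_shape e; lia.
have nc : ~~ is_corner la j c.1 c.2.
  by apply/negP => /andP[/eqP c1 /eqP c2]; move: sd; rewrite /in_shape -e c1; lia.
case nd: (is_corner la j d.1 d.2).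
  by rewrite (tab_extend_corner _ nd); apply: tab_extend_noncorner_lt.
have [a [b [e1 e2 sab]]] := noncorner_cell sc nc.
have [a' [b' [e1' e2' sab']]] := noncorner_cell sd (negbT nd).
rewrite (tab_extendE _ e1 e2 nc) (tab_extendE _ e1' e2' (negbT nd)).
by apply: (h3 (a, b) (a', b')) => /=; lia.
Qed.

Lemma tab_extend_col (c d : 'I_n.+1 * 'I_n.+1) : in_shape la d.1 d.2 ->
  nat_of_ord c.2 = d.2 -> nat_of_ord c.1 < d.1 -> nat_of_ord (t c) < t d.
Proof.
have /syt_onP[_ _ _ h4] := st'; move=> sd e lt.
have sc : in_shape la c.1 c.2.
  by move: sd; rewrite /in_shape -e => /leq_trans; apply; apply: nth_part_mono => //; lia.
have nc : ~~ is_corner la j c.1 c.2.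
  apply/negP => /andP[/eqP c1 /eqP c2]; move: sd rj; rewrite /in_shape /removable -e c2.
  by have := nth_part_mono pl (_ : j.+1 <= d.1); rewrite c1 in lt; move=> /(_ lt); lia.
case nd: (is_corner la j d.1 d.2).
  by rewrite (tab_extend_corner _ nd); apply: tab_extend_noncorner_lt.
have [a [b [e1 e2 sab]]] := noncorner_cell sc nc.
have [a' [b' [e1' e2' sab']]] := noncorner_cell sd (negbT nd).
rewrite (tab_extendE _ e1 e2 nc) (tab_extendE _ e1' e2' (negbT nd)).
by apply: (h4 (a, b) (a', b')) => /=; lia.
Qed.

Lemma syt_tab_extend : syt_on n.+1 la t.
Proof.
by apply/syt_onP; split; [apply: tab_extend_neq0 | apply: tab_extend_inj
  | apply: tab_extend_row | apply: tab_extend_col].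
Qed.

Lemma tab_extendK : tab_restrict t = t'.
Proof.
have /syt_onP[h1 _ _ _] := st'.
apply/ffunP => c; apply: val_inj => /=; rewrite tab_restrictE.
case nc: (is_corner la j (wcell c).1 (wcell c).2).
  rewrite tab_extend_corner //= ltnn; have := h1 c; rewrite in_shape_remove_cell.
  by move: nc => /= ->; rewrite andbF => /negbFE/eqP ->.
rewrite (tab_extendE (c := wcell c) (a := c.1) (b := c.2) _ erefl erefl (negbT nc)).
by case: c {nc} => a b /=; rewrite ltn_ord.
Qed.

End Extend.

Lemma card_syt_on_max_at_corner :
  #|[set t : {ffun 'I_n.+1 * 'I_n.+1 -> 'I_n.+2} | syt_on n.+1 la t && (t corner == ord_max)]|
  = nsyt_on n (remove_cell la j).
Proof.
have -> : [set t | syt_on n.+1 la t && (t corner == ord_max)] =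
    tab_extend la j @: [set t' | syt_on n (remove_cell la j) t'].
  apply/setP => t; rewrite inE; apply/andP/imsetP.
    move=> [st /eqP tc]; exists (tab_restrict t); last by rewrite tab_restrictK.
    by rewrite inE; apply: syt_tab_restrict.
  move=> [t']; rewrite inE => st' ->; split; first exact: syt_tab_extend.
  by rewrite tab_extend_corner // is_corner_cell.
rewrite card_in_imset // => t1 t2; rewrite !inE => s1 s2 e.
by rewrite -(tab_extendK s1) -(tab_extendK s2) e.
Qed.

End RemoveMaxEntry.

Lemma sum_max_at_corner n la (t : {ffun 'I_n.+1 * 'I_n.+1 -> 'I_n.+2}) :
  is_part la -> sumn la = n.+1 -> syt_on n.+1 la t ->
  \sum_(j < size la | removable la j) (t (corner_cell n la j) == ord_max) = 1.
Proof.
move=> pl sl st; have [c sc tc] := syt_on_max pl sl st.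
have [rc e2] := syt_on_max_corner pl sl st sc tc.
have il : c.1 < size la by rewrite size_part_gt //; move: sc; rewrite /in_shape; lia.
have ce : corner_cell n la (Ordinal il) = c.
  by apply/esym/(is_cornerP pl sl rc); rewrite /is_corner e2 !eqxx.
rewrite (bigD1 (Ordinal il)) //= ce tc eqxx big1 // => j /andP[rj ne].
case: eqP => // e; have /syt_onP[_ h2 _ _] := st.
have := h2 _ _ (in_shape_corner_cell pl sl rj) sc (etrans e (esym tc)).
move=> /(congr1 (fun p => nat_of_ord p.1)); have [-> _] := corner_cellE pl sl rj.
by move=> ej; move: ne; rewrite -val_eqE /= ej eqxx.
Qed.

Lemma nsyt_on_rec n la : is_part la -> sumn la = n.+1 ->
  nsyt_on n.+1 la = \sum_(j < size la | removable la j) nsyt_on n (remove_cell la j).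
Proof.
move=> pl sl; rewrite /nsyt_on -sum1_card (eq_bigr (fun t : {ffun 'I_n.+1 * 'I_n.+1 -> 'I_n.+2} =>
    \sum_(j < size la | removable la j) (t (corner_cell n la j) == ord_max) : nat)); last first.
  by move=> t; rewrite inE => st; rewrite sum_max_at_corner.
rewrite exchange_big /=; apply: eq_bigr => j rj.
have := card_syt_on_max_at_corner pl sl rj; rewrite /nsyt_on => <-.
rewrite -sum1_card big_mkcond [RHS]big_mkcond /=.
by apply: eq_bigr => t _; rewrite !inE; case: (syt_on _ _ _); case: (_ == _).
Qed.

Lemma nsyt_on_nil : nsyt_on 0 [::] = 1.
Proof.
rewrite /nsyt_on (_ : [set t | syt_on 0 [::] t] = setT).
  by rewrite cardsT card_ffun card_ord exp1n.
by apply/setP => t; rewrite !inE; apply/and4P; split; apply/forallP; case=> [[]].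
Qed.

Lemma nsyt_nchains la : is_part la -> nsyt la = nchains la.
Proof.
move=> pl; rewrite -[nsyt la]/(nsyt_on (sumn la) la).
move sl: (sumn la) => n; elim: n la sl pl => [|n IH] la sl pl.
  by rewrite (part_sumn0 pl sl) nsyt_on_nil.
rewrite nsyt_on_rec // (@nchains_remove_cell _ (size la)) ?sl //.
apply: eq_bigr => j rj; apply: IH; last exact: is_part_remove_cell.
by rewrite sumn_remove_cell // sl.
Qed.

Lemma aft_behead la : size la <= nth 0 la 0 -> aft la = sumn (behead la).
Proof. by rewrite /aft /part1 /plength; case: la => [|x s] //= h; rewrite maxnE; lia. Qed.

Lemma aft_ctail la : is_part la -> nth 0 la 0 < size la -> aft la = sumn (ctail la).
Proof.
move=> pl h; rewrite sumn_ctail // /aft /part1 /plength (_ : head 0 la = nth 0 la 0) //.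
by rewrite maxnE; lia.
Qed.

Lemma nchains_le_aft la : is_part la ->
  exists2 mu, is_part mu /\ sumn mu = aft la & nchains la <= 'C(sumn la, aft la) * nchains mu.
Proof.
move=> pl; case: (leqP (size la) (nth 0 la 0)) => h.
  rewrite aft_behead //; exists (behead la); last exact: nchains_le_bin_behead.
  by split; [apply: is_part_behead |].
rewrite aft_ctail //; exists (ctail la); last exact: nchains_le_bin_ctail.
by split; [apply: is_part_ctail |].
Qed.

Lemma bin_aft_le_nchains la : is_part la -> 'C(sumn la - aft la, aft la) <= nchains la.
Proof.
move=> pl; have := nth_le_sumn la 0; have := size_le_sumn (all_part_gt0 pl).
case: (leqP (size la) (nth 0 la 0)) => h ls l0.
  have sb : sumn (behead la) = sumn la - nth 0 la 0.
    by case: (la) {pl h ls l0} => //= x s; lia.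
  rewrite (aft_behead h) sb (_ : sumn la - (sumn la - nth 0 la 0) = nth 0 la 0); last by lia.
  exact: bin_part1_le_nchains.
rewrite (aft_ctail pl h) sumn_ctail // (_ : sumn la - (sumn la - size la) = size la); last by lia.
exact: bin_size_le_nchains.
Qed.

Lemma ffact_le_expn n k : n ^_ k <= n ^ k.
Proof.
elim: k n => [|k IH] n; first by rewrite ffactn0.
rewrite ffactnS expnS leq_mul2l; apply/orP; right; apply: leq_trans (IH _) _.
by case: k {IH} => [|k]; rewrite ?expn0 // leq_exp2r //; lia.
Qed.

Import Order.TTheory GRing.Theory Num.Theory.
Local Open Scope ring_scope.

Lemma ler_nat_div_sqrt (R : rcfType) (f c g m N : nat) : (0 < m)%N ->
  (g * g <= m)%N -> (f <= c * g)%N -> (c * m <= N)%N ->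
  f%:R <= N%:R / Num.sqrt m%:R :> R.
Proof.
move=> m0 gm fcg cmN; set s := Num.sqrt m%:R.
have s0 : 0 < s by rewrite sqrtr_gt0 ltr0n.
have gs : g%:R <= s.
  rewrite -[X in X <= _]ger0_norm ?ler0n // -sqrtr_sqr ler_sqrt ?ler0n //.
  by rewrite -natrX ler_nat expnS expn1.
rewrite ler_pdivlMr // (le_trans (_ : _ <= (c * g)%:R * s)) ?ler_pM2r ?ler_nat //.
rewrite natrM -mulrA (le_trans (_ : _ <= c%:R * (s * s))) //.
  by rewrite ler_wpM2l ?ler0n // ler_wpM2r // ltW.
by rewrite -expr2 sqr_sqrtr ?ler0n // -natrM ler_nat.
Qed.

Unset Implicit Arguments.

Theorem mainTheorem3 (R : rcfType) (n k : nat) (la : seq nat) :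
  is_partition n la -> aft la = k ->
  (nsyt la)%:R <= (n ^ k)%:R / Num.sqrt (k`!)%:R :> R
  /\ ('C(n - k, k) <= nsyt la)%N.
Proof.
move=> ip <-; have pl := is_partition_part ip.
have <- : sumn la = n by case/and3P: ip => _ _ /eqP.
rewrite nsyt_nchains //; split; last exact: bin_aft_le_nchains.
have [mu [pm sm] le_mu] := nchains_le_aft pl.
apply: (ler_nat_div_sqrt R (fact_gt0 _) _ le_mu).
  by rewrite -sm nchains_sqr_le_fact.
by rewrite bin_ffact ffact_le_expn.
Qed.
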